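(* Let $y>3$. Then for every integer $k$ with $1\le k\le\log(y)/3$, \[\sum_{m=1}^\infty d_k(m)e^{-m/y}\ll y(\log(3y))^{k+2}.\]
   Context: $d_k$ is the $k$-fold divisor function, i.e. the multiplicative function with $d_k(p^\nu)=\Gamma(k+\nu)/(\Gamma(k)\nu!)$, the Dirichlet coefficients of $\zeta(s)^k$. *)

From mathcomp Require Import ssreflect ssrfun ssrbool eqtype ssrnat seq div
  fintype bigop prime binomial.
From Stdlib Require Import Reals.
From Coquelicot Require Import Coquelicot.

(* k-fold divisor function: multiplicative, with
   d_k(p^nu) = Gamma(k+nu)/(Gamma(k) nu!) = 'C(k+nu-1, nu) for integer k >= 1.
   For m >= 1: d_k(m) = prod_{p | m} 'C(k + v_p(m) - 1, v_p(m)). *)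
Definition dk (k m : nat) : nat :=
  \prod_(p <- primes m) 'C(k + logn p m - 1, logn p m).

From Stdlib Require Import Reals Lra.
From Coquelicot Require Import Coquelicot.
From mathcomp Require Import ssreflect ssrfun ssrbool eqtype ssrnat seq div
  fintype finfun bigop prime binomial.
From mathcomp Require Import Rstruct.

(* Rankin's trick: with s = 1 + 1/log y we have e^{-n/y} <= y^s n^{-s} = e y n^{-s},
   so the series is at most e y sum_n d_k(n) n^{-s}.  Truncated at N, this Dirichlet
   series is at most (sum_{n<=N} n^{-s})^k: indeed d_{k+1}(m) = sum_{d|m} d_k(d), and
   the pairs (d, m/d) with m <= N inject into [0, N]^2.  Finally
   sum_{n<=N} n^{-s} <= 1 + 1/(s-1) = 1 + log y, by comparing n^{-s} with the
   telescoping differences of n^{1-s}/(s-1); and 1 + log y <= log 3y as log 3 >= 1. *)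

Set Implicit Arguments.
Unset Strict Implicit.

Section DivisorFunction.
Local Open Scope nat_scope.

Lemma dk1 m : dk 1 m = 1.
Proof. by rewrite /dk big1 // => p _; rewrite add1n subn1 binn. Qed.

Lemma logn_nprime p n : ~~ prime p -> logn p n = 0.
Proof. by move=> p_npr; rewrite /logn (negbTE p_npr). Qed.

Lemma logn_ltn p d B : d < B -> logn p d < B.
Proof.
move=> dB; have [->|d_gt0] := posnP d; first by rewrite logn0; case: B dB.
exact: leq_trans (ltn_logl p d_gt0) (ltnW dB).
Qed.

Lemma dk_prod_ord k d B : d < B ->
  dk k d = \prod_(p < B) 'C(k + logn p d - 1, logn p d).
Proof.
move=> dB; rewrite (bigID (fun p : 'I_B => val p \in primes d)) /=.
rewrite [X in _ * X]big1 ?muln1; last first.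
  move=> p /negbTE p_d; suff -> : logn p d = 0 by rewrite bin0.
  by apply/eqP; rewrite -leqn0 leqNgt logn_gt0 p_d.
rewrite /dk -(big_mkord (fun p => p \in primes d)
  (fun p => 'C(k + logn p d - 1, logn p d))).
rewrite -[RHS]big_filter.
apply: perm_big; apply: uniq_perm; rewrite ?filter_uniq ?iota_uniq ?primes_uniq //.
move=> p; rewrite mem_filter mem_index_iota /=.
case p_d: (p \in primes d) => //=; move: p_d; rewrite mem_primes => /and3P [_ d_gt0 pd].
exact/esym/(leq_ltn_trans (dvdn_leq d_gt0 pd)).
Qed.

Lemma sum_bin_diag k v B : v < B ->
  \sum_(j < B | j <= v) 'C(k + j - 1, j) = 'C(k + v, v).
Proof.
case: B => // B; rewrite ltnS => vB; rewrite (big_ord_narrow_leq vB) /=.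
elim: v {vB} => [|v IHv]; first by rewrite big_ord1 !bin0.
by rewrite big_ord_recr /= IHv addnS binS addnC subn1.
Qed.

Lemma prod_pow_logn m B : 0 < m -> m < B -> \prod_(p < B) p ^ logn p m = m.
Proof.
move=> m_gt0; case: B => // B; rewrite ltnS => mB.
by rewrite -{2}(partnT m_gt0) (widen_partn _ mB) big_mkord; apply: eq_bigl.
Qed.

Lemma dvdn_prod_pow m B (e : nat -> nat) : 0 < m -> m < B ->
  (forall p, p < B -> e p <= logn p m) -> \prod_(p < B) p ^ e p %| m.
Proof.
move=> m_gt0 mB le_e; rewrite -[X in _ %| X](prod_pow_logn m_gt0 mB).
apply: (big_ind2 (fun x y => x %| y)) => // [x1 x2 y1 y2|p _]; first exact: dvdn_mul.
exact/dvdn_exp2l/le_e.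
Qed.

Lemma logn_prod_pow p B (e : nat -> nat) : prime p ->
    (forall q, ~~ prime q -> e q = 0) ->
  logn p (\prod_(q < B) q ^ e q) = if p < B then e p else 0.
Proof.
move=> p_pr e0; elim: B => [|B IHB]; first by rewrite big_ord0 logn1.
have pow_gt0 q : 0 < q ^ e q by case: q => [|q]; rewrite expn_gt0 //= e0.
rewrite big_ord_recr /= lognM ?pow_gt0 ?prodn_gt0 // IHB lognX ltnS.
have [B_pr|B_npr] := boolP (prime B); last first.
  rewrite (e0 B) // mul0n addn0 [p <= B]leq_eqVlt.
  by have -> : (p == B) = false by apply: contraNF B_npr => /eqP <-.
rewrite logn_prime //.
by case: ltngtP => [_|_|->] /=; rewrite ?muln0 ?addn0 ?add0n ?muln1.
Qed.

Section ExponentVectors.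

Variable m : nat.
Hypothesis m_gt0 : 0 < m.

Definition logn_vec (d : 'I_m.+1) : {ffun 'I_m.+1 -> 'I_m.+1} :=
  [ffun p : 'I_m.+1 => inord (logn p d)].

Definition prod_pows (f : {ffun 'I_m.+1 -> 'I_m.+1}) : 'I_m.+1 :=
  inord (\prod_(q < m.+1) q ^ f q).

Definition exponent_family : pred {ffun 'I_m.+1 -> 'I_m.+1} :=
  family (fun p : 'I_m.+1 => [pred j : 'I_m.+1 | j <= logn p m]).

Lemma logn_vecE (d : 'I_m.+1) p : logn_vec d p = logn p d :> nat.
Proof. by rewrite ffunE inordK ?logn_ltn. Qed.

Lemma prod_powsK (d : 'I_m.+1) : 0 < d -> prod_pows (logn_vec d) = d.
Proof.
move=> d_gt0; apply: val_inj; rewrite /prod_pows /=.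
under eq_bigr do rewrite logn_vecE.
by rewrite prod_pow_logn ?inord_val.
Qed.

Lemma logn_vecK f : f \in exponent_family -> logn_vec (prod_pows f) = f.
Proof.
move=> /familyP f_le; pose e n := if n < m.+1 then val (f (inord n)) else 0.
have prodE : \prod_(q < m.+1) q ^ f q = \prod_(q < m.+1) q ^ e q.
  by apply: eq_bigr => q _; rewrite /e ltn_ord inord_val.
have e_le p : p < m.+1 -> e p <= logn p m.
  by move=> pm; rewrite /e pm; have := f_le (inord p); rewrite unfold_in /= inordK.
have e0 q : ~~ prime q -> e q = 0.
  move=> q_npr; apply/eqP; rewrite -leqn0 -(logn_nprime m q_npr).
  by case: (ltnP q m.+1) => [/e_le //|q_big]; rewrite /e ltnNge q_big.
have prod_le : \prod_(q < m.+1) q ^ f q < m.+1.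
  by rewrite prodE ltnS dvdn_leq // dvdn_prod_pow.
apply/ffunP => p; apply/val_inj; rewrite /= logn_vecE /prod_pows inordK //.
have [p_pr|p_npr] := boolP (prime p).
  by rewrite prodE logn_prod_pow // ltn_ord /e ltn_ord inord_val.
rewrite logn_nprime //; apply/esym/eqP; rewrite -leqn0.
by have := f_le p; rewrite unfold_in /= logn_nprime.
Qed.

Lemma logn_vec_family (d : 'I_m.+1) : 0 < d ->
  (logn_vec d \in exponent_family) = (d %| m).
Proof.
move=> d_gt0; apply/familyP/idP => [d_le | dm p]; last first.
  by rewrite unfold_in /= logn_vecE dvdn_leq_log.
rewrite -(prod_pow_logn d_gt0 (ltn_ord d)).
apply: (dvdn_prod_pow (e := logn^~ d)) => // p pm.
by have := d_le (inord p); rewrite unfold_in /= logn_vecE inordK.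
Qed.

(* A divisor of m is determined by its exponent vector, and these vectors are exactly
   the members of [exponent_family]; summing over them expands the product of local
   factors 'C(k + v, v) = sum_{j <= v} 'C(k + j - 1, j). *)
Lemma dk_succ k : dk k.+1 m = \sum_(d < m.+1 | d %| m) dk k d.
Proof.
rewrite (dk_prod_ord k.+1 (ltnSn m)).
under eq_bigr => p _ do
  rewrite addSn subn1 -(sum_bin_diag _ (logn_ltn p (ltnSn m))).
rewrite bigA_distr_big_dep (reindex_onto logn_vec prod_pows logn_vecK).
apply: eq_big => [d | d _]; last first.
  by rewrite (dk_prod_ord k (ltn_ord d)); apply: eq_bigr => p _; rewrite logn_vecE.
have [d0|d_gt0] := posnP d; last by rewrite prod_powsK // eqxx andbT logn_vec_family.
suff -> : (prod_pows (logn_vec d) == d) = false.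
  by rewrite andbF d0 dvd0n (negbTE (lt0n_neq0 m_gt0)).
have prod1 : \prod_(q < m.+1) q ^ logn_vec d q = 1.
  by apply: big1 => q _; rewrite logn_vecE d0 logn0.
by apply: negbTE; apply/eqP => /(congr1 val); rewrite /prod_pows /= prod1 inordK // d0.
Qed.

End ExponentVectors.

End DivisorFunction.

Open Scope R_scope.

Lemma Rle_sum (I : Type) (r : seq I) (P : pred I) (F G : I -> R) :
  (forall i, P i -> F i <= G i) ->
  \big[Rplus/0]_(i <- r | P i) F i <= \big[Rplus/0]_(i <- r | P i) G i.
Proof. by move=> FG; apply: (big_ind2 Rle) => // *; lra. Qed.

Lemma Rsum_ge0 (I : Type) (r : seq I) (P : pred I) (F : I -> R) :
  (forall i, P i -> 0 <= F i) -> 0 <= \big[Rplus/0]_(i <- r | P i) F i.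
Proof. by move=> F0; apply: (big_ind (Rle 0)) => // *; lra. Qed.

Lemma INR_sum (I : Type) (r : seq I) (P : pred I) (F : I -> nat) :
  INR (\sum_(i <- r | P i) F i) = \big[Rplus/0]_(i <- r | P i) INR (F i).
Proof. by apply: (big_morph INR) => // x y; apply: plus_INR. Qed.

Lemma Rle_sum_filter (I : eqType) (r : seq I) (P : pred I) (F G : I -> R) :
    (forall i, i \in r -> P i -> F i <= G i) ->
    (forall i, i \in r -> 0 <= G i) ->
  \big[Rplus/0]_(i <- r | P i) F i <= \big[Rplus/0]_(i <- r) G i.
Proof.
move=> FG G0; rewrite big_mkcond /= !big_seq; apply: Rle_sum => i ri.
by case: ifP => Pi; [apply: FG | apply: G0].
Qed.

Lemma Rle_sum_term (I : eqType) (r : seq I) (F : I -> R) j :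
  j \in r -> (forall i, i \in r -> 0 <= F i) -> F j <= \big[Rplus/0]_(i <- r) F i.
Proof.
move=> rj F0; rewrite (big_rem j rj) /=.
suff : 0 <= \big[Rplus/0]_(i <- rem j r) F i by lra.
by rewrite big_seq; apply: Rsum_ge0 => i /mem_rem; apply: F0.
Qed.

Lemma sum_n_big (a : nat -> R) N :
  sum_n a N = \big[Rplus/0]_(0 <= n < N.+1) a n.
Proof.
elim: N => [|N IHN]; first by rewrite sum_O big_nat1.
by rewrite sum_Sn IHN [RHS]big_nat_recr.
Qed.

Lemma sum_convolution_le (f g : nat -> R) N :
    (forall n, 0 <= f n) -> (forall n, 0 <= g n) ->
  \big[Rplus/0]_(0 <= m < N.+1) \big[Rplus/0]_(0 <= d < m.+1 | d %| m) (f d * g (m %/ d))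
    <= \big[Rplus/0]_(0 <= d < N.+1) f d * \big[Rplus/0]_(0 <= e < N.+1) g e.
Proof.
move=> f0 g0; pose fg d e := f d * g e.
have fg0 d e : 0 <= fg d e by apply: Rmult_le_pos.
pose fiber_sum m d :=
  \big[Rplus/0]_(0 <= e < N.+1) (if m == (d * e)%N then fg d e else 0).
have fiber_sum0 m d : 0 <= fiber_sum m d.
  by apply: Rsum_ge0 => e _; case: ifP => _; [apply: fg0 | lra].
apply: (Rle_trans _
  (\big[Rplus/0]_(0 <= m < N.+1) \big[Rplus/0]_(0 <= d < N.+1) fiber_sum m d)).
  rewrite !big_seq; apply: Rle_sum => m; rewrite mem_index_iota => /andP [_ mN].
  rewrite (big_nat_widen 0 m.+1 N.+1) //.
  apply: Rle_sum_filter => [d | d _]; last exact: fiber_sum0.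
  rewrite mem_index_iota => /andP [_ dN] /andP [dm _].
  have -> : f d * g (m %/ d) = if m == (d * (m %/ d))%N then fg d (m %/ d) else 0.
    by rewrite eq_sym mulnC -dvdn_eq dm.
  apply: (Rle_sum_term (F := fun e => if m == (d * e)%N then fg d e else 0)).
    by rewrite mem_index_iota (leq_ltn_trans (leq_div m d)).
  by move=> e _; case: ifP => _; [apply: fg0 | lra].
rewrite exchange_big big_distrl /=; apply: Rle_sum => d _.
rewrite exchange_big big_distrr /=; apply: Rle_sum => e _.
rewrite -big_mkcond big_const_seq count_uniq_mem ?iota_uniq //.
by case: (_ \in _) => /=; have := fg0 d e; rewrite /fg; lra.
Qed.

Definition zeta_term (s : R) (n : nat) : R :=
  if n is 0%N then 0 else Rpower (INR n) (- s).

Definition zeta_sum (s : R) (N : nat) : R :=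
  \big[Rplus/0]_(0 <= n < N.+1) zeta_term s n.

Definition dk_sum (s : R) (k N : nat) : R :=
  \big[Rplus/0]_(0 <= n < N.+1) (INR (dk k n) * zeta_term s n).

Lemma zeta_termE s n : (0 < n)%N -> zeta_term s n = Rpower (INR n) (- s).
Proof. by case: n. Qed.

Lemma zeta_term_ge0 s n : 0 <= zeta_term s n.
Proof. by case: n => [|n] /=; [lra | apply/Rlt_le/exp_pos]. Qed.

Lemma zeta_termM s d e : zeta_term s (d * e) = zeta_term s d * zeta_term s e.
Proof.
case: (posnP d) => [->|d_gt0] /=; first lra.
case: (posnP e) => [->|e_gt0]; first by rewrite muln0 /=; lra.
have INR_gt0 n : (0 < n)%N -> 0 < INR n by move=> /ltP; apply: lt_0_INR.
by rewrite !zeta_termE ?muln_gt0 ?d_gt0 // mult_INR Rpower_mult_distr //; apply: INR_gt0.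
Qed.

Lemma Rpower_telescope a t : 0 < a -> 0 < t ->
  Rpower (a + 1) (- (1 + t)) <= (Rpower a (- t) - Rpower (a + 1) (- t)) / t.
Proof.
move=> a_gt0 t_gt0; set b := a + 1; set E := Rpower b (- t).
have b_gt0 : 0 < b by rewrite /b; lra.
have ln_ba : / b <= ln b - ln a.
  have ab_gt0 : 0 < a / b by apply: Rdiv_lt_0_compat.
  have := exp_ineq1_le (ln (a / b)); rewrite exp_ln // ln_div //.
  have -> : a / b = 1 - / b by rewrite /b; field; lra.
  lra.
have Ea : Rpower a (- t) = E * exp (t * (ln b - ln a)).
  by rewrite /E /Rpower -exp_plus; congr exp; ring.
have Eb : Rpower b (- (1 + t)) = E / b.
  rewrite /E /Rpower /Rdiv -{3}(exp_ln b b_gt0) -exp_Ropp -exp_plus.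
  by congr exp; ring.
have E_gt0 : 0 < E by apply: exp_pos.
rewrite Ea Eb; apply: (Rmult_le_reg_r t) => //.
have -> : (E * exp (t * (ln b - ln a)) - E) / t * t
        = E * (exp (t * (ln b - ln a)) - 1) by field; lra.
have -> : E / b * t = E * (t * / b) by field; lra.
apply: Rmult_le_compat_l; first lra.
have := exp_ineq1_le (t * (ln b - ln a)).
have := Rmult_le_compat_l t _ _ (Rlt_le _ _ t_gt0) ln_ba; lra.
Qed.

Lemma zeta_sum_le s N : 1 < s -> zeta_sum s N <= 1 + / (s - 1).
Proof.
move=> s_gt1; set t := s - 1; have t_gt0 : 0 < t by rewrite /t; lra.
have inv_t_gt0 : 0 < / t by apply: Rinv_0_lt_compat.
have -> : s = 1 + t by rewrite /t; ring.
case: N => [|N]; first by rewrite /zeta_sum big_nat1 /=; lra.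
suff : zeta_sum (1 + t) N.+1 <= 1 + (1 - zeta_term t N.+1) / t.
  have := Rdiv_le_0_compat _ t (zeta_term_ge0 t N.+1) t_gt0.
  rewrite /Rdiv Rmult_minus_distr_r Rmult_1_l; lra.
elim: N => [|N IHN].
  rewrite /zeta_sum big_nat_recr // big_nat1 /= /Rpower /= ln_1 !Rmult_0_r exp_0.
  by rewrite Rminus_diag /Rdiv Rmult_0_l; lra.
rewrite /zeta_sum big_nat_recr //= -/(zeta_sum _ N.+1).
have := Rpower_telescope (lt_0_INR _ (Nat.lt_0_succ N)) t_gt0.
rewrite -!S_INR -!zeta_termE //.
move: IHN; rewrite /Rdiv; lra.
Qed.

Lemma dk_sum_succ_le s k N : dk_sum s k.+1 N <= dk_sum s k N * zeta_sum s N.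
Proof.
have dk_w0 n : 0 <= INR (dk k n) * zeta_term s n.
  by apply: Rmult_le_pos; [apply: pos_INR | apply: zeta_term_ge0].
apply: Rle_trans (sum_convolution_le N dk_w0 (zeta_term_ge0 s)); right.
apply: eq_bigr => m _; case: (posnP m) => [->|m_gt0].
  by rewrite /= Rmult_0_r big1 // => d _; rewrite div0n /= Rmult_0_r.
rewrite dk_succ // INR_sum big_mkord big_distrl /=; apply: eq_bigr => d dm.
by rewrite Rmult_assoc -zeta_termM mulnC divnK.
Qed.

Lemma dk_sum_le_pow s k N : (0 < k)%N -> dk_sum s k N <= zeta_sum s N ^ k.
Proof.
case: k => // k _; elim: k => [|k IHk].
  by rewrite /= Rmult_1_r; right; apply: eq_bigr => n _; rewrite dk1 Rmult_1_l.
apply: Rle_trans (dk_sum_succ_le s k.+1 N) _.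
rewrite -tech_pow_Rmult (Rmult_comm (zeta_sum s N)).
apply: Rmult_le_compat_r IHk.
by apply: Rsum_ge0 => n _; apply: zeta_term_ge0.
Qed.

Lemma exp_le_exp x y : x <= y -> exp x <= exp y.
Proof. by case/Rle_lt_or_eq_dec => [/exp_increasing/Rlt_le | ->]; [| right]. Qed.

Lemma ln_le_div_exp1 x : 0 < x -> ln x <= x / exp 1.
Proof.
move=> x_gt0; have := exp_ineq1_le (ln x - 1).
rewrite /Rminus exp_plus exp_ln // exp_Ropp /Rdiv; lra.
Qed.

Lemma exp_neg_le_Rpower s x : 0 <= s <= exp 1 -> 0 < x ->
  exp (- x) <= Rpower x (- s).
Proof.
move=> s_bd x_gt0; apply: exp_le_exp.
have ln_x := ln_le_div_exp1 x_gt0.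
have x_div_e : x / exp 1 * exp 1 = x by field; apply: exp_neq_0.
have e_gt0 := exp_pos 1.
case: (Rle_lt_dec (ln x) 0) => ln_x0; first nra.
have := Rmult_le_compat_l _ _ _ (Rlt_le _ _ e_gt0) ln_x.
have := Rmult_le_compat_r _ _ _ (Rlt_le _ _ ln_x0) (proj2 s_bd).
lra.
Qed.

Lemma dk_series_partial_le y k : exp 1 <= y -> (0 < k)%N -> forall N,
  sum_n (fun n => INR (dk k n.+1) * exp (- INR n.+1 / y)) N
    <= exp 1 * y * (1 + ln y) ^ k.
Proof.
move=> e_le_y k_gt0 N; set L := ln y; set s := 1 + / L.
have e_gt2 : 2 <= exp 1 by have := exp_ineq1_le 1; lra.
have y_gt0 : 0 < y by lra.
have L_ge1 : 1 <= L by rewrite /L -(ln_exp 1); apply: ln_le e_le_y; apply: exp_pos.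
have invL : 0 < / L <= 1.
  by split; [apply: Rinv_0_lt_compat | rewrite -Rinv_1; apply: Rinv_le_contravar]; lra.
have s_bd : 0 <= s <= exp 1 by rewrite /s; lra.
have y_pow_s : Rpower y s = exp 1 * y.
  by rewrite /Rpower /s -{2}(exp_ln y y_gt0) -exp_plus -/L; congr exp; field; lra.
have term_le n : (0 < n)%N ->
    INR (dk k n) * exp (- INR n / y) <= Rpower y s * (INR (dk k n) * zeta_term s n).
  move=> n_gt0; have n_pos : 0 < INR n by apply/lt_0_INR/ltP.
  suff : exp (- INR n / y) <= Rpower y s * zeta_term s n.
    by have := pos_INR (dk k n); nra.
  rewrite zeta_termE // /Rdiv -Ropp_mult_distr_l.
  apply: Rle_trans (exp_neg_le_Rpower s_bd (Rdiv_lt_0_compat _ _ n_pos y_gt0)) _.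
  by right; rewrite /Rpower ln_div // -exp_plus; congr exp; ring.
rewrite sum_n_big.
apply: (Rle_trans _ (Rpower y s * dk_sum s k N.+1)).
  rewrite /dk_sum (big_nat_recl N.+1) // [zeta_term s 0]/= Rmult_0_r Rplus_0_l big_distrr.
  by apply: Rle_sum => n _; apply: term_le.
rewrite y_pow_s; apply: Rmult_le_compat_l; first nra.
apply: Rle_trans (dk_sum_le_pow s N.+1 k_gt0) _.
apply: pow_incr; split; first by apply: Rsum_ge0 => n _; apply: zeta_term_ge0.
have -> : 1 + L = 1 + / (s - 1) by rewrite /s Rplus_minus_l Rinv_inv.
by apply: zeta_sum_le; rewrite /s; lra.
Qed.

Lemma bounded_nonneg_series (a : nat -> R) M :
    (forall n, 0 <= a n) -> (forall N, sum_n a N <= M) ->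
  ex_series a /\ Series a <= M.
Proof.
move=> a_ge0 a_le.
have incr n : sum_n a n <= sum_n a n.+1.
  by rewrite sum_Sn; have := a_ge0 n.+1; rewrite /plus /=; lra.
have [l a_lim] := ex_finite_lim_seq_incr _ M incr a_le.
split; first by exists l.
rewrite /Series (is_lim_seq_unique _ _ a_lim).
exact: is_lim_seq_le _ _ _ _ a_le a_lim (is_lim_seq_const M).
Qed.

Theorem lemma18 :
  exists C : R, 0 < C /\
    forall (y : R) (k : nat),
      3 < y -> (1 <= k)%coq_nat -> INR k <= ln y / 3 ->
      ex_series (fun n : nat => INR (dk k (S n)) * exp (- INR (S n) / y)) /\
      Series (fun n : nat => INR (dk k (S n)) * exp (- INR (S n) / y))
        <= C * y * (ln (3 * y)) ^ (k + 2)%coq_nat.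
Proof.
exists (exp 1); split; first exact: exp_pos.
move=> y k y_gt3 /leP k_gt0 _.
have e_le_y : exp 1 <= y by have := exp_le_3; lra.
have e_gt0 := exp_pos 1.
have term_ge0 n : 0 <= INR (dk k n.+1) * exp (- INR n.+1 / y).
  by apply: Rmult_le_pos; [apply: pos_INR | apply/Rlt_le/exp_pos].
have [ex_dk dk_le] := bounded_nonneg_series term_ge0 (dk_series_partial_le e_le_y k_gt0).
split => //; apply: Rle_trans dk_le _; apply: Rmult_le_compat_l; first nra.
have ln3y : 1 + ln y <= ln (3 * y).
  rewrite ln_mult; try lra.
  suff : 1 <= ln 3 by lra.
  by rewrite -(ln_exp 1); apply: ln_le; [apply: exp_pos | apply: exp_le_3].
have ln_y_gt0 : 0 < ln y by rewrite -ln_1; apply: ln_increasing; lra.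
apply: Rle_trans (pow_incr _ _ k _) (Rle_pow _ _ _ _ (Nat.le_add_r k 2)); lra.
Qed.
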